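(* Fix an automaton $i$, a start time $t$, a length $h$ and a canonical transition set $\mathcal C_{i,t,h}$. For any state $s\in A$, the set $\{F^h(i,r,s,t): r\in\{0,1\}^h\}$ has at most $|\mathcal C_{i,t,h}|$ elements.
   Context: $A$ is the finite state space of a family of automata; $F^h(i,r,s,t)\in A$ is the state that automaton $i$, starting in state $s$ at time $t$, reaches after reading the bits of $r\in\{0,1\}^h$ at times $t,\dots,t+h-1$. For fixed $i,t,h$, $(s_1,s_2)\sim(s_1',s_2')$ means: for all $r\in\{0,1\}^h$, $F^h(i,r,s_1,t)=s_2\iff F^h(i,r,s_1',t)=s_2'$. A canonical transition set is a set $\mathcal C_{i,t,h}\subseteq A\times A$ such that every pair in $A\times A$ is $\sim$-equivalent to some pair of $\mathcal C_{i,t,h}$. *)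

From mathcomp Require Import all_boot.
Set Implicit Arguments. Unset Strict Implicit. Unset Printing Implicit Defensive.

(* A family of automata indexed by I, with finite state space A and a
   (possibly time-dependent) one-step transition function
   delta i b s t = state of automaton i after reading bit b in state s at time t. *)

Fixpoint Fseq (I : Type) (A : finType) (delta : I -> bool -> A -> nat -> A)
    (i : I) (r : seq bool) (s : A) (t : nat) : A :=
  match r with
  | [::] => s
  | b :: r' => Fseq delta i r' (delta i b s t) t.+1
  end.

Definition Fh (I : Type) (A : finType) (delta : I -> bool -> A -> nat -> A)
    (h : nat) (i : I) (r : h.-tuple bool) (s : A) (t : nat) : A :=
  Fseq delta i r s t.

Definition trans_equiv (I : Type) (A : finType) (delta : I -> bool -> A -> nat -> A)
    (i : I) (t h : nat) (p q : A * A) : Prop :=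
  forall r : h.-tuple bool,
    Fh delta i r p.1 t = p.2 <-> Fh delta i r q.1 t = q.2.

Definition canonical_transition_set (I : Type) (A : finType)
    (delta : I -> bool -> A -> nat -> A) (i : I) (t h : nat) (C : {set A * A}) : Prop :=
  forall p : A * A, exists2 q, q \in C & trans_equiv delta i t h p q.

From mathcomp Require Import all_boot.

Set Implicit Arguments.
Unset Strict Implicit.
Unset Printing Implicit Defensive.

(* Send each reachable state s2 = F^h(i,r,s,t) to a canonical representative
   q of the pair (s, s2). Since (s, s2) ~ q forces F^h(i,r,q.1,t) = q.2 and
   hence, conversely, determines s2 as the state reached from s along r, two
   reachable states with the same representative coincide. *)

Lemma leq_card_rel (T U : finType) (R : T -> U -> bool) (X : {set T}) (Y : {set U}) :
    {in X, forall x, exists2 y, y \in Y & R x y} ->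
    {in X &, forall x x' y, R x y -> R x' y -> x = x'} ->
  #|X| <= #|Y|.
Proof.
move=> RXY Rinj; have [-> | [x0 _]] := set_0Vmem X; first by rewrite cards0.
pose g y := odflt x0 [pick x in X | R x y].
apply: leq_trans (leq_imset_card g Y); apply: subset_leq_card.
apply/subsetP=> x xX; have [y yY Rxy] := RXY x xX.
apply/imsetP; exists y => //; rewrite /g.
case: pickP => [x' /andP[x'X Rx'y] | /(_ x)]; last by rewrite xX Rxy.
exact: Rinj _ _ xX x'X _ Rxy Rx'y.
Qed.

Definition trans_equivb (I : Type) (A : finType) (delta : I -> bool -> A -> nat -> A)
    (i : I) (t h : nat) (p q : A * A) : bool :=
  [forall r : h.-tuple bool,
     (Fh delta i r p.1 t == p.2) == (Fh delta i r q.1 t == q.2)].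

Lemma trans_equivP (I : Type) (A : finType) (delta : I -> bool -> A -> nat -> A)
    (i : I) (t h : nat) (p q : A * A) :
  reflect (trans_equiv delta i t h p q) (trans_equivb delta i t h p q).
Proof.
apply: (iffP forallP) => E r.
  by have /eqP Er := E r; split=> /eqP; [rewrite Er | rewrite -Er] => /eqP.
by apply/eqP; apply/idP/idP => /eqP /(E r) /eqP.
Qed.
Arguments trans_equivP {I A delta i t h p q}.

Lemma trans_equiv_reached (I : Type) (A : finType) (delta : I -> bool -> A -> nat -> A)
    (i : I) (t h : nat) (r : h.-tuple bool) (s x : A) (q : A * A) :
    trans_equiv delta i t h (s, Fh delta i r s t) q ->
    trans_equiv delta i t h (s, x) q ->
  x = Fh delta i r s t.
Proof. by move=> /(_ r) [/(_ erefl) Rq _] /(_ r) [_ /(_ Rq)]. Qed.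

Theorem proposition6p8 (I : Type) (A : finType) (delta : I -> bool -> A -> nat -> A)
    (i : I) (t h : nat) (C : {set A * A}) :
  canonical_transition_set delta i t h C ->
  forall s : A,
    #|[set Fh delta i r s t | r : h.-tuple bool]| <= #|C|.
Proof.
move=> canC s.
apply: (@leq_card_rel _ _ (fun x => trans_equivb delta i t h (s, x))).
- by move=> x _; have [q qC Esq] := canC (s, x); exists q; last exact/trans_equivP.
- move=> _ _ /imsetP[r _ ->] /imsetP[r' _ ->] q.
  by move=> /trans_equivP Erq /trans_equivP /(trans_equiv_reached Erq).
Qed.
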